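(* Consider the $2$-user symmetric linear deterministic Z interference channel with unidirectional, rate-limited transmitter cooperation of capacity $C$ (any nonnegative integer) from transmitter $2$ to transmitter $1$, with integer parameters $m\ge1$, $n\ge0$, and suppose $\alpha\ge 2$, where $\alpha=n/m$. Then the secrecy capacity region (under the perfect secrecy constraint) is the set of all $(R_1,R_2)$ with $0\le R_1\le m$ and $R_2=0$.
   Context: Model: let $q=\max\{m,n\}$ and let $\mathbf{D}$ be the $q\times q$ downshift matrix over $\mathbb{F}_2$ (entries $d_{j',j''}=1$ if $2\le j'=j''+1\le q$, and $0$ otherwise). At each channel use, transmitter $i$ sends $\mathbf{x}_i\in\mathbb{F}_2^q$, and the outputs are $\mathbf{y}_1=\mathbf{D}^{q-m}\mathbf{x}_1\oplus\mathbf{D}^{q-n}\mathbf{x}_2$ and $\mathbf{y}_2=\mathbf{D}^{q-m}\mathbf{x}_2$, where $\oplus$ is componentwise addition mod $2$. Transmitter $i$ has a message $W_i$ uniform on $\{1,\dots,2^{NR_i}\}$ ($N$ = block length, rates in bits per channel use). Transmitter $2$ can send to transmitter $1$, over a noiseless secure link, at most $C$ bits per channel use; transmitter $2$'s signal depends only on $W_2$ (and possibly its own randomness), while transmitter $1$'s signal at each time is a function of $W_1$, the bits received so far over the cooperative link (causality), and possibly locally generated random bits. Receiver $i$ decodes $W_i$ from $\mathbf{y}_i^N$. A rate pair is achievable with perfect secrecy if there are such codes with decoding error probability tending to $0$ as $N\to\infty$ and $I(W_i;\mathbf{y}_j^N)=0$ for $i\neq j$. The secrecy capacity region is the closure of the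 set of achievable rate pairs. *)

From HB Require Import structures.
From mathcomp Require Import all_boot all_order all_algebra.
From mathcomp Require Import all_classical all_reals all_analysis.
Set Implicit Arguments. Unset Strict Implicit. Unset Printing Implicit Defensive.
Import Order.TTheory GRing.Theory Num.Theory numFieldTopology.Exports.
Local Open Scope ring_scope.
Local Open Scope classical_set_scope.

Definition qdim (m n : nat) : nat := maxn m n.

Definition downshift (q : nat) : 'M['F_2]_q :=
  \matrix_(i, j) ((nat_of_ord i == (nat_of_ord j).+1)%:R : 'F_2).

Definition Dpow (q k : nat) (x : 'cV['F_2]_q) : 'cV['F_2]_q :=
  iter k (mulmx (downshift q)) x.

Definition out1 (m n : nat) (x1 x2 : 'cV['F_2]_(qdim m n)) : 'cV['F_2]_(qdim m n) :=
  Dpow (qdim m n - m) x1 + Dpow (qdim m n - n) x2.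
Definition out2 (m n : nat) (x1 x2 : 'cV['F_2]_(qdim m n)) : 'cV['F_2]_(qdim m n) :=
  Dpow (qdim m n - m) x2.

Definition linksym (C : nat) := {ffun 'I_C -> bool}.

(** A code of block length N with message sets 'I_M1, 'I_M2.
    Local randomness of transmitter i: L_i uniform random bits. *)
Record code (m n C N M1 M2 : nat) := Code {
  L1 : nat;
  L2 : nat;
  coop : 'I_M2 -> {ffun 'I_L2 -> bool} -> 'I_N -> linksym C;
  enc1 : 'I_N -> 'I_M1 -> {ffun 'I_L1 -> bool} -> {ffun 'I_N -> linksym C} ->
         'cV['F_2]_(qdim m n);
  enc2 : 'I_M2 -> {ffun 'I_L2 -> bool} -> 'I_N -> 'cV['F_2]_(qdim m n);
  dec1 : {ffun 'I_N -> 'cV['F_2]_(qdim m n)} -> 'I_M1;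
  dec2 : {ffun 'I_N -> 'cV['F_2]_(qdim m n)} -> 'I_M2;
  enc1_causal : forall (t : 'I_N) w u (v v' : {ffun 'I_N -> linksym C}),
      (forall s : 'I_N, (s <= t)%N -> v s = v' s) -> enc1 t w u v = enc1 t w u v'
}.

Arguments L1 {m n C N M1 M2} c.
Arguments L2 {m n C N M1 M2} c.
Arguments coop {m n C N M1 M2} c _ _ _.
Arguments enc1 {m n C N M1 M2} c _ _ _ _.
Arguments enc2 {m n C N M1 M2} c _ _ _.
Arguments dec1 {m n C N M1 M2} c _.
Arguments dec2 {m n C N M1 M2} c _.

Section CodeRV.
Variables (m n C N M1 M2 : nat) (c : code m n C N M1 M2).

(** Sample space: (W1, W2, U1, U2), uniformly distributed. *)
Definition omega : finType :=
  ('I_M1 * 'I_M2 * {ffun 'I_(L1 c) -> bool} * {ffun 'I_(L2 c) -> bool})%type.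

Definition W1 (w : omega) : 'I_M1 := w.1.1.1.
Definition W2 (w : omega) : 'I_M2 := w.1.1.2.
Definition U1 (w : omega) := w.1.2.
Definition U2 (w : omega) := w.2.
Definition linkseq (w : omega) : {ffun 'I_N -> linksym C} :=
  [ffun t => coop c (W2 w) (U2 w) t].
Definition X1 (w : omega) : {ffun 'I_N -> 'cV['F_2]_(qdim m n)} :=
  [ffun t => enc1 c t (W1 w) (U1 w) (linkseq w)].
Definition X2 (w : omega) : {ffun 'I_N -> 'cV['F_2]_(qdim m n)} :=
  [ffun t => enc2 c (W2 w) (U2 w) t].
Definition Y1 (w : omega) : {ffun 'I_N -> 'cV['F_2]_(qdim m n)} :=
  [ffun t => out1 (X1 w t) (X2 w t)].
Definition Y2 (w : omega) : {ffun 'I_N -> 'cV['F_2]_(qdim m n)} :=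
  [ffun t => out2 (X1 w t) (X2 w t)].
End CodeRV.

Definition Pr (R : realType) (T : finType) (A : pred T) : R :=
  #|A|%:R / #|T|%:R.

(** Mutual information I(X;Y) (natural log; 0 log 0 = 0). *)
Definition mutinfo (R : realType) (T A B : finType) (X : T -> A) (Y : T -> B) : R :=
  \sum_(a : A) \sum_(b : B)
    (let pab := Pr R [pred t | (X t == a) && (Y t == b)] in
     if pab == 0 then 0
     else pab * ln (pab / (Pr R [pred t | X t == a] * Pr R [pred t | Y t == b]))).

Definition errprob (R : realType) m n C N M1 M2 (c : code m n C N M1 M2) : R :=
  Pr R [pred w : omega c | (dec1 c (Y1 w) != W1 w) || (dec2 c (Y2 w) != W2 w)].

Definition achievable (R : realType) (m n C : nat) (r : R * R) : Prop :=
  0 <= r.1 /\ 0 <= r.2 /\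
  exists (M1 M2 : nat -> nat) (c : forall N, code m n C N (M1 N) (M2 N)),
    (forall N : nat,
        (2 : R) `^ (N%:R * r.1) <= (M1 N)%:R /\ (2 : R) `^ (N%:R * r.2) <= (M2 N)%:R) /\
    (forall N : nat,
        mutinfo R (@W1 _ _ _ _ _ _ (c N)) (@Y2 _ _ _ _ _ _ (c N)) = 0 /\
        mutinfo R (@W2 _ _ _ _ _ _ (c N)) (@Y1 _ _ _ _ _ _ (c N)) = 0) /\
    (forall eps : R, 0 < eps -> exists N0 : nat, forall N : nat,
        (N0 <= N)%N -> errprob R (c N) <= eps).

Definition secrecy_capacity_region (R : realType) (m n C : nat) : set (R * R) :=
  closure ([set r | achievable m n C r] : set (R * R)).

From Pilot Require Import Defs.
From HB Require Import structures.
From mathcomp Require Import all_boot all_order all_algebra.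
From mathcomp Require Import all_classical all_reals all_analysis.
From mathcomp Require Import zify ring lra.
Import Order.TTheory GRing.Theory Num.Theory numFieldTopology.Exports.
Local Open Scope ring_scope.
Local Open Scope classical_set_scope.

(* Since [n >= 2m], receiver 2 sees a function of what receiver 1 sees: [y2 = D^(n-m) y1].
   Perfect secrecy of [W2] at receiver 1 makes [W2] independent of [y1] (zero mutual
   information forces independence by Gibbs' inequality), hence of [y2], so receiver 2
   decodes correctly with probability [1/M2] and [R2 = 0].  Receiver 1 sees only the top
   [m] levels of [x1]; given [W2] and both local randomizations it can therefore
   distinguish at most [2^(m N)] messages, so [R1 <= m].  Conversely, sending [m] bits
   per use uncoded on those levels, with transmitter 2 silent, achieves every such [R1]
   with no error and trivially perfect secrecy, and the resulting region is closed. *)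

Section Downshift.
Variable q : nat.
Implicit Types (x y : 'cV['F_2]_q) (i j : 'I_q).

Lemma downshift_mul0 x i : nat_of_ord i = 0%N -> (downshift q *m x) i 0 = 0.
Proof. by move=> i0; rewrite !mxE big1 // => j _; rewrite mxE i0 mul0r. Qed.

Lemma downshift_mulS x i j : nat_of_ord i = j.+1 -> (downshift q *m x) i 0 = x j 0.
Proof.
move=> iS; rewrite !mxE (bigD1 j) //= mxE iS eqxx mul1r big1 ?addr0 // => k kj.
by rewrite mxE iS eqSS (inj_eq val_inj) eq_sym (negbTE kj) mul0r.
Qed.

Lemma Dpow_lt k x i : (i < k)%N -> Dpow k x i 0 = 0.
Proof.
elim: k i => [|k IHk] i //= ik; rewrite /Dpow /=.
have [i0|i_gt0] := posnP i; first exact: downshift_mul0.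
have i1_lt : (i.-1 < q)%N by rewrite (leq_ltn_trans (leq_pred _)).
rewrite (@downshift_mulS _ _ (Ordinal i1_lt)) /= ?prednK //.
by apply: IHk; rewrite /= -ltnS prednK.
Qed.

Lemma Dpow_addn k x i j : nat_of_ord i = (j + k)%N -> Dpow k x i 0 = x j 0.
Proof.
elim: k i => [|k IHk] i ijk.
  by congr (x _ _); apply: val_inj; rewrite /= ijk addn0.
have i1_lt : (i.-1 < q)%N by rewrite (leq_ltn_trans (leq_pred _)).
rewrite /Dpow /= (@downshift_mulS _ _ (Ordinal i1_lt)) /= ?ijk ?addnS //.
by apply: IHk; rewrite /= ijk addnS.
Qed.

Lemma eq_Dpow k x y :
  (forall j, (j + k < q)%N -> x j 0 = y j 0) -> Dpow k x = Dpow k y.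
Proof.
move=> xy; apply/matrixP => i c; rewrite (ord1 c).
have [ik|ki] := ltnP i k; first by rewrite !Dpow_lt.
have ik_lt : (i - k < q)%N by rewrite (leq_ltn_trans (leq_subr _ _)).
have ijk : nat_of_ord i = (Ordinal ik_lt + k)%N by rewrite /= subnK.
by rewrite (Dpow_addn _ x _ _ ijk) (Dpow_addn _ y _ _ ijk) xy // -ijk.
Qed.

Lemma Dpow_eq0 k x : (q <= k)%N -> Dpow k x = 0.
Proof.
move=> qk; apply/matrixP => i c; rewrite (ord1 c) mxE Dpow_lt //.
exact: leq_trans (ltn_ord i) qk.
Qed.

Lemma Dpow0 k : Dpow k (0 : 'cV['F_2]_q) = 0.
Proof. by elim: k => // k IHk; rewrite /Dpow iterS -/(Dpow k 0) IHk mulmx0. Qed.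

Lemma DpowD k x y : Dpow k (x + y) = Dpow k x + Dpow k y.
Proof. by elim: k => // k IHk; rewrite /Dpow !iterS -!/(Dpow k _) IHk mulmxDr. Qed.

Lemma Dpow_add k l x : Dpow (k + l) x = Dpow k (Dpow l x).
Proof. exact: iterD. Qed.

End Downshift.

Lemma qdimE m n : (m <= n)%N -> qdim m n = n.
Proof. by move/maxn_idPr. Qed.

Lemma eq_out1 m n (x1 x1' x2 : 'cV['F_2]_(qdim m n)) :
  (forall j : 'I_(qdim m n), (j < m)%N -> x1 j 0 = x1' j 0) ->
  out1 x1 x2 = out1 x1' x2.
Proof.
move=> x1x1'; rewrite /out1 (@eq_Dpow _ _ x1 x1') // => j jq.
by apply: x1x1'; have := leq_maxl m n; rewrite -/(qdim m n); lia.
Qed.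

(* Shifting [y1] down by [n - m] more levels pushes [D^(n-m) x1] out entirely,
   since [2 (n - m) >= n], and leaves exactly [y2]. *)
Lemma out2_out1 m n (x1 x2 : 'cV['F_2]_(qdim m n)) : (2 * m <= n)%N ->
  out2 x1 x2 = Dpow (qdim m n - m) (out1 x1 x2).
Proof.
move=> mn; have qn : qdim m n = n by apply: qdimE; lia.
rewrite /out1 /out2; have -> : (qdim m n - n = 0)%N by rewrite qn subnn.
rewrite DpowD -Dpow_add (@Dpow_eq0 _ _ x1) ?add0r //.
by rewrite qn; lia.
Qed.

Section RelativeEntropy.
Context {R : realType} {I : finType}.

Lemma ln_lt_subr1 (y : R) : 0 < y -> y != 1 -> ln y < y - 1.
Proof.
move=> y_gt0 y_neq1; have ypos : y \is Num.pos by rewrite posrE.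
by rewrite ltrBrDl -[X in _ < X](lnK ypos) expR_gt1Dx // ln_eq0.
Qed.

Lemma subr_lt_mul_ln {p q : R} : 0 < p -> 0 < q -> p != q -> p - q < p * ln (p / q).
Proof.
move=> p_gt0 q_gt0 pq; have qp_gt0 : 0 < q / p by rewrite divr_gt0.
have qp_neq1 : q / p != 1.
  by apply: contra pq => /eqP qp1; rewrite -[q](divfK (lt0r_neq0 p_gt0)) qp1 mul1r.
have -> : p / q = (q / p)^-1 by rewrite invf_div.
have -> : p - q = p * (1 - q / p) by field; rewrite gt_eqF.
by rewrite lnV ?posrE // ltr_pM2l // ltrNr opprB ln_lt_subr1.
Qed.

Lemma subr_le_mul_ln (p q : R) : 0 < p -> 0 < q -> p - q <= p * ln (p / q).
Proof.
move=> p_gt0 q_gt0; have [<-|pq] := eqVneq p q.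
  by rewrite subrr divff ?gt_eqF // ln1 mulr0.
exact/ltW/subr_lt_mul_ln.
Qed.

Definition rel_entropy (p q : I -> R) : R :=
  \sum_i (if p i == 0 then 0 else p i * ln (p i / q i)).

(* Gibbs: the summands of [rel_entropy p q] dominate the [p i - q i], whose sum is 0,
   so a vanishing relative entropy makes them coincide, which forces [p i = q i]. *)
Lemma rel_entropy_eq0 (p q : I -> R) :
  (forall i, 0 <= p i) -> (forall i, 0 <= q i) -> (forall i, 0 < p i -> 0 < q i) ->
  \sum_i p i = \sum_i q i -> rel_entropy p q = 0 -> p =1 q.
Proof.
move=> p_ge0 q_ge0 pq_gt0 sum_pq D0.
pose d i := (if p i == 0 then 0 else p i * ln (p i / q i)) - (p i - q i).
have d_ge0 i : 0 <= d i.
  rewrite /d; case: ifP => [/eqP->|/negbT p_neq0]; first by rewrite !sub0r opprK.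
  have p_gt0 : 0 < p i by rewrite lt_def p_neq0 p_ge0.
  by rewrite subr_ge0 subr_le_mul_ln ?pq_gt0.
have sum_d : \sum_i d i = 0.
  by rewrite /d /rel_entropy in D0 *; rewrite !sumrB sum_pq D0 subrr subr0.
move=> i; have /eqP := psumr_eq0P (fun i _ => d_ge0 i) sum_d isT (i := i).
rewrite /d; case: ifP => [/eqP-> |/negbT p_neq0]; first by rewrite !sub0r opprK eq_sym => /eqP.
have p_gt0 : 0 < p i by rewrite lt_def p_neq0 p_ge0.
rewrite subr_eq0 => /eqP d0; have [//|pq] := eqVneq (p i) (q i).
by have := subr_lt_mul_ln p_gt0 (pq_gt0 _ p_gt0) pq; rewrite d0 ltxx.
Qed.

End RelativeEntropy.

Section UniformProbability.
Context {R : realType} {T : finType}.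
Implicit Types (S : pred T).

Lemma Pr_ge0 S : 0 <= Pr R S.
Proof. by rewrite /Pr divr_ge0. Qed.

Lemma le_Pr S1 S2 : (forall t, S1 t -> S2 t) -> Pr R S1 <= Pr R S2.
Proof.
move=> S12; rewrite /Pr ler_wpM2r ?invr_ge0 // ler_nat.
by apply/subset_leq_card/fintype.subsetP => t; rewrite !unfold_in; apply: S12.
Qed.

Lemma eq_Pr S1 S2 : S1 =1 S2 -> Pr R S1 = Pr R S2.
Proof. by move=> S12; rewrite /Pr (eq_card S12). Qed.

Lemma Pr_pred0 S : S =1 xpred0 -> Pr R S = 0.
Proof. by move=> S0; rewrite /Pr (eq_card S0) card0 mul0r. Qed.

Lemma Pr_predT : (0 < #|T|)%N -> Pr R (@predT T) = 1.
Proof. by move=> T_gt0; rewrite /Pr divff // pnatr_eq0 -lt0n. Qed.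

Lemma Pr_predC S : (0 < #|T|)%N -> Pr R [pred t | ~~ S t] = 1 - Pr R S.
Proof.
move=> T_gt0; rewrite -(Pr_predT T_gt0) /Pr -mulrBl -natrB ?max_card //.
by rewrite -(cardC S) addKn.
Qed.

Lemma sum_Pr_fiber {B : finType} S (Y : T -> B) :
  \sum_b Pr R [pred t | S t && (Y t == b)] = Pr R S.
Proof.
rewrite /Pr -mulr_suml -natr_sum -sum1_card (partition_big Y xpredT) //=.
by congr (_%:R / _); apply: eq_bigr => b _; rewrite -sum1_card.
Qed.

Lemma sum_Pr_eq1 {B : finType} (Y : T -> B) :
  (0 < #|T|)%N -> \sum_b Pr R [pred t | Y t == b] = 1.
Proof. by move=> T_gt0; rewrite -(Pr_predT T_gt0) -(sum_Pr_fiber predT Y). Qed.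

Definition independent {A B : finType} (X : T -> A) (Y : T -> B) : Prop :=
  forall a b, Pr R [pred t | (X t == a) && (Y t == b)] =
              Pr R [pred t | X t == a] * Pr R [pred t | Y t == b].

Context {A B : finType} {X : T -> A} {Y : T -> B}.

Lemma independent_sym : independent X Y -> independent Y X.
Proof. by move=> XY b a; rewrite mulrC -XY; apply: eq_Pr => t; rewrite /= andbC. Qed.

Lemma independent_constr y0 :
  (0 < #|T|)%N -> (forall t, Y t = y0) -> independent X Y.
Proof.
move=> T_gt0 Yy0 a b; have [->|b_neq] := eqVneq b y0.
  have -> : Pr R [pred t | Y t == y0] = 1.
    by rewrite -(Pr_predT T_gt0); apply: eq_Pr => t; rewrite /= Yy0 eqxx.
  by rewrite mulr1; apply: eq_Pr => t; rewrite /= Yy0 eqxx andbT.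
have Yb t : (Y t == b) = false by rewrite Yy0 eq_sym (negbTE b_neq).
rewrite (@Pr_pred0 [pred t | Y t == b]) ?mulr0 //.
by apply: Pr_pred0 => t /=; rewrite Yb andbF.
Qed.

Lemma mutinfoE : mutinfo R X Y =
  rel_entropy (fun ab : A * B => Pr R [pred t | (X t == ab.1) && (Y t == ab.2)])
         (fun ab => Pr R [pred t | X t == ab.1] * Pr R [pred t | Y t == ab.2]).
Proof. by rewrite /mutinfo pair_bigA. Qed.

Lemma mutinfo_independent : independent X Y -> mutinfo R X Y = 0.
Proof.
move=> XY; rewrite mutinfoE /rel_entropy big1 // => -[a b] _ /=.
by case: ifP => // /negbT XY_neq0; rewrite [Z in ln (Z / _)]XY divff -?XY // ln1 mulr0.
Qed.

Lemma independent_mutinfo : (0 < #|T|)%N -> mutinfo R X Y = 0 -> independent X Y.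
Proof.
move=> T_gt0; rewrite mutinfoE => /rel_entropy_eq0 XY a b; apply: (XY _ _ _ _ (a, b)) => {a b}.
- by move=> ab; apply: Pr_ge0.
- by move=> ab; rewrite mulr_ge0 ?Pr_ge0.
- move=> [a b] /= XY_gt0; rewrite mulr_gt0 //.
    by apply: lt_le_trans XY_gt0 _; apply: le_Pr => t /andP[].
  by apply: lt_le_trans XY_gt0 _; apply: le_Pr => t /andP[].
- rewrite -(pair_bigA _ (fun a b => Pr R [pred t | (X t == a) && (Y t == b)])).
  rewrite -(pair_bigA _ (fun a b => Pr R [pred t | X t == a] * Pr R [pred t | Y t == b])).
  apply: eq_bigr => a _; rewrite -mulr_sumr sum_Pr_eq1 // mulr1.
  exact: (sum_Pr_fiber [pred t | X t == a] Y).
Qed.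

Lemma Pr_guess_independent (g : B -> A) (c : R) :
  (0 < #|T|)%N -> independent X Y -> (forall a, Pr R [pred t | X t == a] = c) ->
  Pr R [pred t | g (Y t) == X t] = c.
Proof.
move=> T_gt0 XY Xc.
rewrite -(sum_Pr_fiber _ Y) -[RHS]mulr1 -(sum_Pr_eq1 Y T_gt0) mulr_sumr.
apply: eq_bigr => b _; rewrite -(Xc (g b)) -XY; apply: eq_Pr => t /=.
by have [->|] := eqVneq (Y t) b; rewrite ?andbF // !andbT eq_sym.
Qed.

End UniformProbability.

Local Notation frames N m := {ffun 'I_N -> {ffun 'I_m -> 'F_2}}.

Lemma card_frames N m : #|frames N m| = (2 ^ (m * N))%N.
Proof. by rewrite !card_ffun card_Fp // !card_ord -expnM. Qed.

Lemma card_bits L : #|{ffun 'I_L -> bool}| = (2 ^ L)%N.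
Proof. by rewrite card_ffun card_bool card_ord. Qed.

Section CodeBounds.
Context {R : realType} {m n C N M1 M2 : nat} (c : Defs.code m n C N M1 M2).
Hypotheses (M1_gt0 : (0 < M1)%N) (M2_gt0 : (0 < M2)%N).

Lemma card_omega : #|omega c| = (M1 * M2 * 2 ^ L1 c * 2 ^ L2 c)%N.
Proof. by rewrite !card_prod !card_ord !card_bits. Qed.

Lemma omega_gt0 : (0 < #|omega c|)%N.
Proof. by rewrite card_omega !muln_gt0 M1_gt0 M2_gt0 !expn_gt0. Qed.

Lemma Pr_W2 (a : 'I_M2) : Pr R [pred w : omega c | W2 w == a] = M2%:R^-1.
Proof.
pose S := finset.setX (finset.setX (finset.setX [set: 'I_M1] [set a])
  [set: {ffun 'I_(L1 c) -> bool}]) [set: {ffun 'I_(L2 c) -> bool}].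
rewrite /Pr (eq_card (B := S)); last by move=> w; rewrite !inE /W2 /= !andbT.
rewrite !cardsX !cardsT cards1 card_omega !card_bits !card_ord !natrM.
by field; rewrite !pnatr_eq0 -!lt0n M1_gt0 M2_gt0 !expn_gt0.
Qed.

(* Receiver 1 only sees the top [m] levels of [x1], so given [(W2, U1, U2)] it can
   tell apart at most [2^(m N)] values of [W1]. *)
Lemma card_dec1_correct :
  (#|[pred w : omega c | dec1 c (Y1 w) == W1 w]| <=
    M2 * 2 ^ L1 c * 2 ^ L2 c * 2 ^ (m * N))%N.
Proof.
have mq : (m <= qdim m n)%N := leq_maxl m n.
pose top (w : omega c) : frames N m := [ffun t => [ffun j => X1 w t (widen_ord mq j) 0]].
pose phi (w : omega c) := (W2 w, U1 w, U2 w, top w).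
have Y1_phi w w' : phi w = phi w' -> Y1 w = Y1 w'.
  case=> W2_eq _ U2_eq top_eq; apply/ffunP => t; rewrite !ffunE W2_eq U2_eq.
  apply: eq_out1 => j jm; have jE : widen_ord mq (Ordinal jm) = j by apply: val_inj.
  by have := congr1 (fun f : frames N m => f t (Ordinal jm)) top_eq; rewrite !ffunE jE.
have phi_inj : {in [pred w | dec1 c (Y1 w) == W1 w] &, injective phi}.
  move=> w w' /eqP dec_w /eqP dec_w' phi_ww'.
  have W1_eq : W1 w = W1 w' by rewrite -dec_w -dec_w' (Y1_phi _ _ phi_ww').
  clear dec_w dec_w'; move: w w' W1_eq phi_ww' => [[[? ?] ?] ?] [[[? ?] ?] ?].
  by rewrite /phi /W1 /W2 /U1 /U2 /= => -> [-> -> -> _].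
rewrite -(card_in_image phi_inj); apply: leq_trans (max_card _) _.
by rewrite !card_prod card_ord !card_bits card_frames.
Qed.

Lemma Pr_dec1_correct :
  Pr R [pred w : omega c | dec1 c (Y1 w) == W1 w] <= (2 ^ (m * N))%:R / M1%:R.
Proof.
set K := (M2 * 2 ^ L1 c * 2 ^ L2 c)%N.
rewrite /Pr (_ : #|omega c| = K * M1)%N; last by rewrite card_omega /K; ring.
apply: le_trans (_ : (K * 2 ^ (m * N))%:R / (K * M1)%:R <= _).
  by rewrite ler_wpM2r ?invr_ge0 // ler_nat card_dec1_correct.
rewrite !natrM -mulf_div divff ?mul1r // -!natrM pnatr_eq0 -lt0n.
by rewrite !muln_gt0 M2_gt0 !expn_gt0.
Qed.

Lemma errprob_ge_dec1 : 1 - (2 ^ (m * N))%:R / M1%:R <= errprob R c.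
Proof.
apply: le_trans (_ : Pr R [pred w : omega c | ~~ (dec1 c (Y1 w) == W1 w)] <= _).
  by rewrite Pr_predC ?omega_gt0 // lerD2l lerN2 Pr_dec1_correct.
by apply: le_Pr => w /= ->.
Qed.

Lemma Y2_Y1 (w : omega c) : (2 * m <= n)%N ->
  Y2 w = [ffun t => Dpow (qdim m n - m) (Y1 w t)].
Proof. by move=> mn; apply/ffunP => t; rewrite !ffunE out2_out1. Qed.

Lemma Pr_dec2_correct :
  (2 * m <= n)%N -> mutinfo R (W2 (c := c)) (Y1 (c := c)) = 0 ->
  Pr R [pred w : omega c | dec2 c (Y2 w) == W2 w] = M2%:R^-1.
Proof.
move=> mn /(independent_mutinfo omega_gt0) W2_Y1.
pose g (y : {ffun 'I_N -> 'cV['F_2]_(qdim m n)}) :=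
  dec2 c [ffun t => Dpow (qdim m n - m) (y t)].
rewrite -(Pr_guess_independent g _ omega_gt0 W2_Y1 Pr_W2).
by apply: eq_Pr => w; rewrite /= Y2_Y1.
Qed.

Lemma errprob_ge_dec2 : (2 * m <= n)%N ->
  mutinfo R (W2 (c := c)) (Y1 (c := c)) = 0 -> 1 - M2%:R^-1 <= errprob R c.
Proof.
move=> mn W2_Y1.
apply: le_trans (_ : Pr R [pred w : omega c | ~~ (dec2 c (Y2 w) == W2 w)] <= _).
  by rewrite Pr_predC ?omega_gt0 // Pr_dec2_correct.
by apply: le_Pr => w /= ->; rewrite orbT.
Qed.

End CodeBounds.

Definition pad q {m} (g : {ffun 'I_m -> 'F_2}) : 'cV['F_2]_q :=
  \col_i (if insub (nat_of_ord i) : option 'I_m is Some j then g j else 0).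

Lemma pad_widen q m (mq : (m <= q)%N) (g : {ffun 'I_m -> 'F_2}) (j : 'I_m) :
  pad q g (widen_ord mq j) 0 = g j.
Proof. by rewrite mxE insubT //= => j_lt; congr (g _); apply: val_inj. Qed.

Lemma lift_top_subproof {m} n (j : 'I_m) : (j + (qdim m n - m) < qdim m n)%N.
Proof. by have := ltn_ord j; have := leq_maxl m n; rewrite -/(qdim m n); lia. Qed.

Definition lift_top {m} n (j : 'I_m) : 'I_(qdim m n) := Ordinal (lift_top_subproof n j).

(* Transmitter 1 sends [m] fresh bits per channel use on the levels that reach
   receiver 1 directly; transmitter 2 and the cooperative link stay silent. *)
Definition uncoded_code m n C N : Defs.code m n C N #|frames N m| 1 :=
  @Code m n C N #|frames N m| 1 0 0
    (fun _ _ _ => [ffun _ => false])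
    (fun t w1 _ _ => pad (qdim m n) (enum_val w1 t))
    (fun _ _ _ => 0)
    (fun y => enum_rank ([ffun t => [ffun j => y t (lift_top n j) 0]] : frames N m))
    (fun _ => ord0)
    (fun _ _ _ _ _ _ => erefl).

Section UncodedCode.
Variables (R : realType) (m n C N : nat).
Implicit Type w : omega (uncoded_code m n C N).

Lemma uncoded_dec1 w : dec1 (uncoded_code m n C N) (Y1 w) = W1 w.
Proof.
rewrite /= -[RHS]enum_valK; congr enum_rank; apply/ffunP => t; apply/ffunP => j.
rewrite !ffunE /out1 /= Dpow0 addr0.
by rewrite (@Dpow_addn _ _ _ _ (widen_ord (leq_maxl m n) j)) // pad_widen.
Qed.

Lemma uncoded_W2 w : W2 w = ord0.
Proof. exact: ord1. Qed.

Lemma uncoded_Y2 w : Y2 w = [ffun=> 0].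
Proof. by apply/ffunP => t; rewrite !ffunE /out2 /= Dpow0. Qed.

Lemma uncoded_omega_gt0 : (0 < #|omega (uncoded_code m n C N)|)%N.
Proof. by rewrite omega_gt0 // card_frames expn_gt0. Qed.

Lemma uncoded_errprob : errprob R (uncoded_code m n C N) = 0.
Proof.
apply: Pr_pred0 => w; have := uncoded_dec1 w; rewrite /= => ->.
by rewrite uncoded_W2 !eqxx.
Qed.

End UncodedCode.

Lemma achievable_uncoded (R : realType) m n C (r : R * R) :
  0 <= r.1 <= m%:R -> r.2 = 0 -> achievable m n C r.
Proof.
move=> /andP[r1_ge0 r1_le] r2_0; split => //; split; first by rewrite r2_0.
exists (fun N => #|frames N m|), (fun _ => 1%N), (uncoded_code m n C); split; [|split].
- move=> N; rewrite r2_0 mulr0 powRr0 card_frames natrX -powR_mulrn // natrM.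
  by split => //; rewrite ler_powR ?ler1n // [_ * N%:R]mulrC ler_wpM2l.
- move=> N; split; apply: mutinfo_independent.
    by apply: independent_constr => [|w]; [exact: uncoded_omega_gt0 | exact: uncoded_Y2].
  apply/independent_sym/independent_constr => [|w];
    [exact: uncoded_omega_gt0 | exact: uncoded_W2].
- by move=> eps eps_gt0; exists 0%N => N _; rewrite uncoded_errprob ltW.
Qed.

Section Converse.
Context {R : realType}.

Lemma archi_mul_ge1 {d : R} : 0 < d -> exists K, forall N, (K <= N)%N -> 1 <= N%:R * d.
Proof.
move=> d_gt0; exists (Num.Def.archi_bound d^-1) => N KN.
rewrite -ler_pdivrMr // div1r ltW // (lt_le_trans (archi_boundP _)) ?ler_nat //.
by rewrite invr_ge0 ltW.
Qed.

Lemma vanishing_lt (e : nat -> R) (d : R) : 0 < d ->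
  (forall eps, 0 < eps -> exists N0, forall N, (N0 <= N)%N -> e N <= eps) ->
  forall K, exists2 N, (K <= N)%N & e N < d.
Proof.
move=> d_gt0 e_vanish K.
have [N0 e_small] := e_vanish (d / 2) (divr_gt0 d_gt0 (ltr0Sn _ 1)).
exists (maxn N0 K); first exact: leq_maxr.
by apply: le_lt_trans (e_small _ (leq_maxl _ _)) _; rewrite ltr_pdivrMr // ltr_pMr // ltr1n.
Qed.

Lemma pow2_le_natr_gt0 {x : R} {M : nat} : 2 `^ x <= M%:R -> (0 < M)%N.
Proof. by move=> xM; rewrite -(ltr0n R) (lt_le_trans _ xM) // powR_gt0. Qed.

Lemma pow2_div_le_half {m N M : nat} {r : R} :
  2 `^ (N%:R * r) <= M%:R -> 1 <= N%:R * (r - m%:R) ->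
  (2 ^ (m * N))%:R / M%:R <= 2^-1 :> R.
Proof.
move=> rM gap; have P_gt0 : 0 < 2 `^ (N%:R * r) :> R by apply: powR_gt0.
apply: le_trans (_ : 2 `^ (N%:R * m%:R) / 2 `^ (N%:R * r) <= _).
  rewrite natrX -powR_mulrn // natrM [_ * N%:R]mulrC ler_wpM2l ?powR_ge0 //.
  by rewrite lef_pV2 ?posrE // (lt_le_trans P_gt0).
rewrite -powRB ?pnatr_eq0 ?implybT // -powR_inv1 // ler_powR ?ler1n //.
by move: gap; rewrite mulrBr; lra.
Qed.

Lemma achievable_rate1_le m n C (r : R * R) : achievable m n C r -> r.1 <= m%:R.
Proof.
case=> _ [_ [M1 [M2 [c [rate [_ err]]]]]]; rewrite leNgt; apply/negP => m_lt_r1.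
have [K gap] : exists K, forall N, (K <= N)%N -> 1 <= N%:R * (r.1 - m%:R).
  by apply: archi_mul_ge1; rewrite subr_gt0.
have [N KN err_lt] : exists2 N, (K <= N)%N & errprob R (c N) < 2^-1.
  by apply: (@vanishing_lt (fun N => errprob R (c N)) _ _ err K); rewrite invr_gt0.
have [M1_ge M2_ge] := rate N.
have := errprob_ge_dec1 (R := R) (c N) (pow2_le_natr_gt0 M1_ge) (pow2_le_natr_gt0 M2_ge).
have := pow2_div_le_half M1_ge (gap N KN).
lra.
Qed.

Lemma achievable_rate2_eq0 m n C (r : R * R) :
  (2 * m <= n)%N -> achievable m n C r -> r.2 = 0.
Proof.
move=> mn [_ [r2_ge0 [M1 [M2 [c [rate [secrecy err]]]]]]].
apply/eqP; rewrite eq_le r2_ge0 andbT leNgt; apply/negP => r2_gt0.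
have [K gap] := archi_mul_ge1 r2_gt0.
have [N KN err_lt] : exists2 N, (K <= N)%N & errprob R (c N) < 2^-1.
  by apply: (@vanishing_lt (fun N => errprob R (c N)) _ _ err K); rewrite invr_gt0.
have [M1_ge M2_ge] := rate N; have M2_gt0 := pow2_le_natr_gt0 M2_ge.
have := errprob_ge_dec2 (c N) (pow2_le_natr_gt0 M1_ge) M2_gt0 mn (secrecy N).2.
have M2_ge2 : 2 <= (M2 N)%:R :> R by apply: le_trans M2_ge; rewrite le1r_powR ?ler1n ?gap.
have : (M2 N)%:R^-1 <= 2^-1 :> R by rewrite lef_pV2 ?posrE ?ltr0n.
lra.
Qed.

End Converse.

Lemma closed_segment_axis (R : realType) (M : R) :
  closed [set r : R * R | 0 <= r.1 <= M /\ r.2 = 0].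
Proof.
have -> : [set r : R * R | 0 <= r.1 <= M /\ r.2 = 0] =
    fst @^-1` `[0, M] `&` snd @^-1` [set 0].
  by apply/seteqP; split => r /=; rewrite in_itv.
apply: closedI; apply: (proj1 (continuous_closedP _)).
- by move=> x; apply: cvg_fst.
- exact: itv_closed.
- by move=> x; apply: cvg_snd.
- exact: closed_eq.
Qed.

Theorem theorem3 (R : realType) (m n C : nat) :
  (1 <= m)%N -> (2 : R) <= n%:R / m%:R ->
  @secrecy_capacity_region R m n C =
    [set r : R * R | 0 <= r.1 <= m%:R /\ r.2 = 0].
Proof.
move=> m_gt0; rewrite ler_pdivlMr ?ltr0n // -natrM ler_nat => mn.
have achievableE : [set r | achievable m n C r] =
    [set r : R * R | 0 <= r.1 <= m%:R /\ r.2 = 0].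
  apply/seteqP; split => r /=.
  - move=> r_ach; split; last exact: achievable_rate2_eq0 r_ach.
    by case: (r_ach) => r1_ge0 _; rewrite r1_ge0; exact: achievable_rate1_le r_ach.
  - by case=> r1_bounds r2_0; apply: achievable_uncoded.
rewrite /secrecy_capacity_region achievableE.
by have /closure_id <- := closed_segment_axis R m%:R.
Qed.
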